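(* Let $X_1,X_2$ be independent real random variables with densities $f_{X_1},f_{X_2}$ that are symmetric about their means $\mu_1,\mu_2$ and positive on all of $\mathbb{R}$, and let $\Theta$ be a $[0,1]$-valued random variable with density $\pi$, independent of $(X_1,X_2)$. Let $\psi:[0,1]\to[n]$ be any preference disclosure policy and $M=\psi(\Theta)$. Suppose the platform uses a weighted-quadratic disclosure (WQD) policy $\gamma$ with weights $w_1,\dots,w_n\in[0,1]$, let $S=\gamma(M,X_1,X_2)$ and let the signal be $Y=(S,X_S)$. Then the equilibrium estimation policy $\eta^\star$ (the Bayes-consistent estimator $\eta^\star(y,m)=(\mathbf{E}[X_1\mid M=m,Y=y],\,\mathbf{E}[X_2\mid M=m,Y=y])$, wherever these conditional expectations are defined) is $$\eta^\star(y,m)=\begin{cases}(x_1,\mu_2), & \text{if } y=(1,x_1),\\ (\mu_1,x_2), & \text{if } y=(2,x_2).\end{cases}$$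
   Context: $[n]=\{1,\dots,n\}$ for a positive integer $n$. The receiver observes $\Theta=\theta$ and sends the message $m=\psi(\theta)\in[n]$. The platform observes $(m,x_1,x_2)$ and chooses $s=\gamma(m,x_1,x_2)\in\{1,2\}$; the receiver then observes $y=(1,x_1)$ if $s=1$ and $y=(2,x_2)$ if $s=2$. A WQD policy with weights $w_1,\dots,w_n\in[0,1]$ is the policy $\gamma(m,x_1,x_2)=1$ if $w_m(x_1-\mu_1)^2>(1-w_m)(x_2-\mu_2)^2$, and $\gamma(m,x_1,x_2)=2$ otherwise. *)

From mathcomp Require Import all_boot all_order all_algebra.
From mathcomp Require Import all_classical all_reals all_analysis.
Import Order.TTheory GRing.Theory Num.Theory.
Import numFieldNormedType.Exports.
Set Implicit Arguments. Unset Strict Implicit. Unset Printing Implicit Defensive.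
Local Open Scope classical_set_scope.
Local Open Scope ring_scope.

Section Defs.
Context {R : realType} {d : measure_display} {T : measurableType d}.

Definition has_density (P : probability T R) (X : T -> R) (f : R -> R) : Prop :=
  forall A : set R, measurable A ->
    P (X @^-1` A) = (\int[@lebesgue_measure R]_(x in A) (f x)%:E)%E.

Definition indep2 (P : probability T R) (X Y : T -> R) : Prop :=
  forall A B : set R, measurable A -> measurable B ->
    P (X @^-1` A `&` Y @^-1` B) = (P (X @^-1` A) * P (Y @^-1` B))%E.

Definition indep_of_pair (P : probability T R) (Th X1 X2 : T -> R) : Prop :=
  forall A B C : set R, measurable A -> measurable B -> measurable C ->
    P (X1 @^-1` A `&` X2 @^-1` B `&` Th @^-1` C)
    = (P (X1 @^-1` A `&` X2 @^-1` B) * P (Th @^-1` C))%E.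

Definition wqd {n : nat} (w : 'I_n -> R) (mu1 mu2 : R) (m : 'I_n) (x1 x2 : R) : nat :=
  if (1 - w m) * (x2 - mu2) ^+ 2 < w m * (x1 - mu1) ^+ 2 then 1%N else 2%N.

Definition signal (s : nat) (x1 x2 : R) : nat * R :=
  (s, if s == 1%N then x1 else x2).

Definition eta_star {n : nat} (mu1 mu2 : R) (y : nat * R) (m : 'I_n) : R * R :=
  if y.1 == 1%N then (y.2, mu2) else (mu1, y.2).

(* g(Y, M) is a version of E[X | M, Y], where M is finite-valued and
   Y = (S, X_S) with S finite-valued: g(Y,M) is integrable and the defining
   identity E[X 1_E] = E[g(Y,M) 1_E] holds on every event
   E = {M = m, S = s, X_S in A} (these generate sigma(M, Y), and every
   event of sigma(M, Y) is a finite disjoint union of them). *)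
Definition cond_exp_version {n : nat} (P : probability T R) (X : T -> R)
    (M : T -> 'I_n) (Y : T -> nat * R) (g : nat * R -> 'I_n -> R) : Prop :=
  P.-integrable setT (EFin \o (fun t => g (Y t) (M t))) /\
  forall (m : 'I_n) (s : nat) (A : set R), measurable A ->
    let E := [set t | M t = m /\ (Y t).1 = s /\ A (Y t).2] in
    (\int[P]_(t in E) (X t)%:E = \int[P]_(t in E) (g (Y t) (M t))%:E)%E.

End Defs.

From mathcomp Require Import all_boot all_order all_algebra.
From mathcomp Require Import all_classical all_reals all_analysis.
From mathcomp Require Import ring lra measurable_realfun.
Import Order.TTheory GRing.Theory Num.Theory.
Local Open Scope classical_set_scope.
Local Open Scope ring_scope.

(* When the platform discloses X1, the estimate x1 of X1 is exact.  When it
   withholds X1, the event {M = m, S = 2, X2 in A} is {(X1, (X2, Th)) in B} for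
   a set B invariant under x1 |-> 2 mu1 - x1, since the WQD test only sees
   (x1 - mu1)^2.  As X1 has a density symmetric about mu1 and is independent
   of (X2, Th), this reflection preserves the joint law of (X1, (X2, Th)), so
   E[(X1 - mu1) 1_B] = - E[(X1 - mu1) 1_B] = 0. *)

Lemma measurableT_preimage {d d'} {T : measurableType d}
    {T' : measurableType d'} {g : T -> T'} {A : set T'} :
  measurable_fun setT g -> measurable A -> measurable (g @^-1` A).
Proof. by move=> mg mA; rewrite -[X in measurable X]setTI; exact: mg. Qed.

(* Stated on [measurableTypeR R], the carrier of [lebesgue_measure]. *)
Lemma measurable_subr {R : realType} (c : R) :
  measurable_fun (setT : set (measurableTypeR R))
    ((fun x => c - x) : R -> measurableTypeR R).
Proof. exact: measurable_funB. Qed.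

Lemma lebesgue_measure_subr (R : realType) (c : R) (A : set R) : measurable A ->
  pushforward lebesgue_measure ((fun x => c - x) : R -> measurableTypeR R) A =
  lebesgue_measure A.
Proof.
move=> mA; apply/esym/lebesgue_measure_unique => //=.
  exact: measurable_subr.
move=> _ _ [[a b]] _ <-; rewrite /pushforward.
have -> : (fun x : R => c - x) @^-1` `]a, b]%classic = `[c - b, c - a[%classic.
  by apply/seteqP; split => x /=; rewrite !in_itv /= => /andP[? ?];
    apply/andP; split; lra.
rewrite !lebesgue_measure_itv /= !lte_fin ltrD2l ltrN2.
by case: ifP => // _; rewrite -!EFinD; congr (_%:E); ring.
Qed.

Lemma has_density_reflect {R : realType} {d} {T : measurableType d}
    {P : probability T R} {U : T -> R} {f : R -> R} {mu : R} :
  measurable_fun setT f -> (forall x, 0 <= f x) ->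
  (forall t, f (mu + t) = f (mu - t)) -> has_density P U f ->
  forall A, measurable A ->
  P ((fun t => mu + mu - U t) @^-1` A) = P (U @^-1` A).
Proof.
move=> mf f0 f_sym dU A mA.
have mrA : measurable ((fun x : R => mu + mu - x) @^-1` A).
  exact: measurableT_preimage (measurable_subr _) mA.
have f_reflect x : f (mu + mu - x) = f x.
  by rewrite -addrA f_sym; congr f; ring.
transitivity (P (U @^-1` ((fun x => mu + mu - x) @^-1` A))) => //.
rewrite !dU //.
transitivity (\int[lebesgue_measure]_(x in (fun x : R => mu + mu - x)%R @^-1` A)
    ((fun y => (f y)%:E) \o (fun x : R => mu + mu - x)%R) x)%E.
  by apply: eq_integral => x _; rewrite /= f_reflect.
rewrite -(ge0_integral_pushforward (measurable_subr (mu + mu))) //.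
- apply: (eq_measure_integral lebesgue_measure) => [|? B mB _].
    exact: measurable_subr.
  exact: lebesgue_measure_subr.
- by apply/measurable_EFinP; exact: measurable_funTS.
- by move=> y _; rewrite lee_fin.
Qed.

Lemma measure_preimage_unique_rectangles d d1 d2 (T : measurableType d)
    (T1 : measurableType d1) (T2 : measurableType d2) (R : realType)
    (P1 P2 : {measure set T -> \bar R}) (Z1 Z2 : T -> T1 * T2) :
  measurable_fun setT Z1 -> measurable_fun setT Z2 -> (P1 setT < +oo)%E ->
  (forall A B, measurable A -> measurable B ->
     P1 (Z1 @^-1` (A `*` B)) = P2 (Z2 @^-1` (A `*` B))) ->
  forall X, measurable X -> P1 (Z1 @^-1` X) = P2 (Z2 @^-1` X).
Proof.
move=> mZ1 mZ2 P1oo rectE X mX.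
have rect_setI :
    setI_closed [set A `*` B | A in @measurable _ T1 & B in @measurable _ T2].
  move=> _ _ [A1 mA1 [B1 mB1 <-]] [A2 mA2 [B2 mB2 <-]]; rewrite -setXI.
  exists (A1 `&` A2); first exact: measurableI.
  by exists (B1 `&` B2) => //; exact: measurableI.
change (pushforward P1 Z1 X = pushforward P2 Z2 X).
apply: (measure_unique _ (fun=> setT) (measurable_prod_measurableType _ _)
  rect_setI).
- by move=> _; exists setT => //; exists setT => //; rewrite setXTT.
- by rewrite bigcup_const.
- by move=> _ [A mA [B mB <-]]; exact: rectE.
- by move=> _; rewrite /= /pushforward preimage_setT.
- exact: mX.
Qed.

Lemma integrable_subr_cst {d} {T : measurableType d} {R : realType}
    {P : {finite_measure set T -> \bar R}} {U : T -> R} (c : R) :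
  P.-integrable setT (EFin \o U) -> P.-integrable setT (fun t => (U t - c)%:E).
Proof.
move=> iU.
have := integrableB measurableT iU
  (finite_measure_integrable_cst P c measurableT).
by apply: eq_integrable => // t _ /=; rewrite EFinB.
Qed.

Lemma fin_num_eq_oppe {R : numDomainType} (x : \bar R) :
  x \is a fin_num -> x = (- x)%E -> x = 0%E.
Proof.
by case: x => // r _ /eqP; rewrite eqe -addr_eq0 -mulr2n mulrn_eq0 => /eqP ->.
Qed.

Lemma integral_comp_eq_law {d d'} {T : measurableType d}
    {T' : measurableType d'} {R : realType} {P : {measure set T -> \bar R}}
    {Z Z' : T -> T'} {F : T' -> \bar R} :
  measurable_fun setT Z -> measurable_fun setT Z' -> measurable_fun setT F ->
  (forall X, measurable X -> P (Z @^-1` X) = P (Z' @^-1` X)) ->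
  P.-integrable setT (F \o Z) -> P.-integrable setT (F \o Z') ->
  (\int[P]_t (F \o Z) t = \int[P]_t (F \o Z') t)%E.
Proof.
move=> mZ mZ' mF lawE iFZ iFZ'.
rewrite -[LHS](integral_pushforward mZ mF iFZ measurableT).
rewrite -[RHS](integral_pushforward mZ' mF iFZ' measurableT).
by apply: eq_measure_integral => X mX _; exact: lawE.
Qed.

Section reflection_invariance.
Context {R : realType} {d d1 d2 : measure_display} {T : measurableType d}.
Context {T1 : measurableType d1} {T2 : measurableType d2}.
Context {P : probability T R} {U : T -> R} {V : T -> T1} {W : T -> T2}.
Context {f : R -> R} {mu : R}.
Hypotheses (mU : measurable_fun setT U) (mV : measurable_fun setT V)
  (mW : measurable_fun setT W).
Hypotheses (mf : measurable_fun setT f) (f_ge0 : forall x, 0 <= f x)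
  (f_sym : forall t, f (mu + t) = f (mu - t)) (dU : has_density P U f)
  (iU : P.-integrable setT (EFin \o U)).
Hypothesis indep3 :
  forall A B C, measurable A -> measurable B -> measurable C ->
  P (U @^-1` A `&` V @^-1` B `&` W @^-1` C) =
  (P (U @^-1` A) * P (V @^-1` B) * P (W @^-1` C))%E.

Let U' t := mu + mu - U t.
Let VW t := (V t, W t).
Let Z t := (U t, VW t).
Let Z' t := (U' t, VW t).

Let mU' : measurable_fun setT U'.
Proof. exact: measurableT_comp (measurable_subr _) mU. Qed.

Let mVW : measurable_fun setT VW.
Proof. exact: measurable_fun_pair. Qed.

Let mZ : measurable_fun setT Z.
Proof. exact: measurable_fun_pair. Qed.

Let mZ' : measurable_fun setT Z'.
Proof. exact: measurable_fun_pair. Qed.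

Lemma reflect_joint_law_rectangle A D : measurable A -> measurable D ->
  P (U' @^-1` A `&` VW @^-1` D) = P (U @^-1` A `&` VW @^-1` D).
Proof.
move=> mA mD; rewrite !(setIC _ (VW @^-1` D)).
change (mrestr P (measurableT_preimage mU' mA) (VW @^-1` D) =
        mrestr P (measurableT_preimage mU mA) (VW @^-1` D)).
apply: measure_preimage_unique_rectangles => //.
  apply: le_lt_trans (probability_le1 P _) (ltry _).
  exact: measurableI (measurableT_preimage mU' mA).
move=> B C mB mC; rewrite /= /mrestr.
have -> : VW @^-1` (B `*` C) = V @^-1` B `&` W @^-1` C by [].
have mrA : measurable ((fun x => mu + mu - x) @^-1` A).
  exact: measurableT_preimage (measurable_subr _) mA.
rewrite !(setIC (V @^-1` B `&` W @^-1` C)) !setIA.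
rewrite (indep3 _ _ _ mrA mB mC) indep3 //.
by rewrite (has_density_reflect mf f_ge0 f_sym dU _ mA).
Qed.

Lemma reflect_joint_law X : measurable X -> P (Z' @^-1` X) = P (Z @^-1` X).
Proof.
apply: measure_preimage_unique_rectangles.
- exact: mZ'.
- exact: mZ.
- exact: le_lt_trans (probability_le1 P measurableT) (ltry _).
- by move=> A D mA mD; exact: reflect_joint_law_rectangle.
Qed.

Lemma integral_centered_reflect_invariant (B : set (R * (T1 * T2))) :
  measurable B -> (forall x y, B (mu + mu - x, y) = B (x, y)) ->
  (\int[P]_(t in Z @^-1` B) (U t - mu)%:E = 0)%E.
Proof.
move=> mB symB.
pose F := (fun z : R * (T1 * T2) => (z.1 - mu)%:E) \_ B.
have mF : measurable_fun setT F.
  apply/(measurable_restrictT _ mB); apply: measurable_funTS.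
  apply/measurable_EFinP.
  by apply: measurable_funB => //; exact: measurable_fst.
have mE : measurable (Z @^-1` B) := measurableT_preimage mZ mB.
have iFZ : P.-integrable setT (F \o Z).
  apply/(integrable_mkcond _ mE).
  exact: integrableS measurableT mE (@subsetT _ _) (integrable_subr_cst mu iU).
have FZ'E : F \o Z' = -%E \o (F \o Z).
  apply/funext => t; rewrite /F /patch /=.
  have -> : (Z' t \in B) = (Z t \in B).
    by apply/idP/idP => /set_mem Bt; apply/mem_set; move: Bt;
      rewrite /Z' /U' symB.
  case: ifP => _; last by rewrite oppe0.
  by rewrite -EFinN /U'; congr (_%:E); ring.
have iFZ' : P.-integrable setT (F \o Z') by rewrite FZ'E; exact: integrableN.
rewrite integral_mkcond -[_ \_ _]/(F \o Z).
apply: fin_num_eq_oppe; first exact: (integrable_fin_num measurableT iFZ).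
rewrite -integralN; last first.
  by rewrite fin_num_adde_defl // fin_numN; exact: integrable_neg_fin_num iFZ.
transitivity (\int[P]_t (F \o Z') t)%E; last by rewrite FZ'E.
apply: integral_comp_eq_law mZ mZ' mF _ iFZ iFZ' => X mX.
exact/esym/reflect_joint_law.
Qed.

Lemma integral_reflect_invariant (B : set (R * (T1 * T2))) :
  measurable B -> (forall x y, B (mu + mu - x, y) = B (x, y)) ->
  (\int[P]_(t in Z @^-1` B) (U t)%:E = \int[P]_(t in Z @^-1` B) mu%:E)%E.
Proof.
move=> mB symB; have mE : measurable (Z @^-1` B) := measurableT_preimage mZ mB.
transitivity (\int[P]_(t in Z @^-1` B) ((U t - mu)%:E + mu%:E))%E.
  by apply: eq_integral => t _; rewrite -EFinD subrK.
rewrite integralD //; last 2 first.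
- exact: integrableS measurableT mE (@subsetT _ _) (integrable_subr_cst mu iU).
- exact: (finite_measure_integrable_cst P mu mE).
by rewrite integral_centered_reflect_invariant // add0e.
Qed.

End reflection_invariance.

Section reveal_or_mean.
Context {R : realType} {d : measure_display} {T : measurableType d}.
Context {P : probability T R} {n : nat} {psi : R -> 'I_n}.
Context {U V W : T -> R} {f : R -> R} {mu : R}.
Hypotheses (mU : measurable_fun setT U) (mV : measurable_fun setT V)
  (mW : measurable_fun setT W).
Hypotheses (mf : measurable_fun setT f) (f_ge0 : forall x, 0 <= f x)
  (f_sym : forall t, f (mu + t) = f (mu - t)) (dU : has_density P U f)
  (iU : P.-integrable setT (EFin \o U)).
Hypothesis indep3 :
  forall A B C, measurable A -> measurable B -> measurable C ->
  P (U @^-1` A `&` V @^-1` B `&` W @^-1` C) =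
  (P (U @^-1` A) * P (V @^-1` B) * P (W @^-1` C))%E.
Hypothesis psi_meas : forall i, measurable [set x : R | psi x = i].
Context {revealed : 'I_n -> R -> R -> bool}.
Hypothesis revealed_meas :
  forall m, measurable_fun setT (fun z : R * R => revealed m z.1 z.2).
Hypothesis revealed_reflect :
  forall m x y, revealed m (mu + mu - x) y = revealed m x y.
Context {s1 s2 : nat} {Y : T -> nat * R} {g : nat * R -> 'I_n -> R}.
Hypothesis s12 : s1 != s2.
Hypothesis YE : forall t,
  Y t = if revealed (psi (W t)) (U t) (V t) then (s1, U t) else (s2, V t).
Hypotheses (g_revealed : forall x m, g (s1, x) m = x)
  (g_hidden : forall x m, g (s2, x) m = mu).

Let M t := psi (W t).
Let shown t := revealed (M t) (U t) (V t).

Let measurable_shown : measurable [set t | shown t].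
Proof.
have -> : [set t | shown t] = \bigcup_(m in setT)
    (W @^-1` [set x | psi x = m] `&` (fun t => (U t, V t)) @^-1`
      ((fun z => revealed m z.1 z.2) @^-1` [set true])).
  by apply/seteqP; split => [t st | t [m _ [/= <-]]] //; exists (M t).
apply: fin_bigcup_measurable; first exact: finite_finset.
move=> m _; apply: measurableI; apply: measurableT_preimage => //.
  exact: measurable_fun_pair.
exact: measurableT_preimage.
Qed.

Let estimatorE t : g (Y t) (M t) = if shown t then U t else mu.
Proof. by rewrite YE /shown /M; case: ifP. Qed.

Let Y_shown t : shown t -> Y t = (s1, U t).
Proof. by rewrite YE /shown /M => ->. Qed.

Let Y_hidden t : ~~ shown t -> Y t = (s2, V t).
Proof. by rewrite YE /shown /M => /negbTE ->. Qed.

Let shown_Y1 t : (Y t).1 = s1 -> shown t.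
Proof.
case: (boolP (shown t)) => // /Y_hidden -> /= /eqP.
by rewrite eq_sym (negbTE s12).
Qed.

Let hidden_Y1 t : (Y t).1 = s2 -> ~~ shown t.
Proof.
by case: (boolP (shown t)) => // /Y_shown -> /= /eqP; rewrite (negbTE s12).
Qed.

Lemma integrable_reveal_or_mean :
  P.-integrable setT (EFin \o (fun t => g (Y t) (M t))).
Proof.
apply: (eq_integrable _
  (fun t => ((fun t => (U t - mu)%:E) \_ [set t | shown t]) t + mu%:E)) => //.
  move=> t _; rewrite /= estimatorE /patch.
  case: (boolP (shown t)) => st; first by rewrite mem_set // -EFinD subrK.
  by rewrite memNset ?add0e //; exact/negP.
apply: integrableD => //; last exact: finite_measure_integrable_cst.
apply/(integrable_mkcond _ measurable_shown).
exact: integrableS measurableT measurable_shown (@subsetT _ _)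
  (integrable_subr_cst mu iU).
Qed.

Lemma integral_reveal_or_mean_event m s A : measurable A ->
  let E := [set t | M t = m /\ (Y t).1 = s /\ A (Y t).2] in
  (\int[P]_(t in E) (U t)%:E = \int[P]_(t in E) (g (Y t) (M t))%:E)%E.
Proof.
move=> mA.
have [-> E | s1s] := eqVneq s s1.
  apply: eq_integral => t /set_mem [_ [/shown_Y1 st _]].
  by rewrite estimatorE st.
have [-> E | s2s E] := eqVneq s s2; last first.
  have -> : E = set0.
    apply/seteqP; split => t // [_ [Ys _]]; move: Ys.
    by case: (boolP (shown t)) => [/Y_shown | /Y_hidden] -> /= Ys;
      [move: s1s | move: s2s]; rewrite Ys eqxx.
  by rewrite !integral_set0.
pose B := (fun z : R * (R * R) => z.2.2) @^-1` [set x | psi x = m] `&`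
  (fun z : R * (R * R) => revealed m z.1 z.2.1) @^-1` [set false] `&`
  (fun z : R * (R * R) => z.2.1) @^-1` A.
have mB : measurable B.
  apply: measurableI; [apply: measurableI |]; apply: measurableT_preimage.
  - exact: measurableT_comp measurable_snd measurable_snd.
  - exact: psi_meas.
  - exact: measurableT_comp (revealed_meas m)
      (measurable_fun_pair measurable_fst
        (measurableT_comp measurable_fst measurable_snd)).
  - by [].
  - exact: measurableT_comp measurable_fst measurable_snd.
  - exact: mA.
have symB x y : B (mu + mu - x, y) = B (x, y) by rewrite /B /= revealed_reflect.
have EB : E = (fun t => (U t, (V t, W t))) @^-1` B.
  apply/seteqP; split => t /=.
    move=> [Mt [/hidden_Y1 hst]]; rewrite Y_hidden //= => At.
    by split => //; split => //; rewrite -Mt; exact/negbTE.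
  move=> [[Mt hst] At]; have hst' : ~~ shown t by rewrite /shown /M Mt hst.
  by split => //; rewrite Y_hidden.
rewrite EB (integral_reflect_invariant mU mV mW mf f_ge0 f_sym dU iU indep3
  _ mB symB).
apply: eq_integral => t /set_mem [[Mt hst] _].
by rewrite estimatorE /shown /M Mt /= hst.
Qed.

Lemma cond_exp_version_reveal_or_mean : cond_exp_version P U M Y g.
Proof.
split; first exact: integrable_reveal_or_mean.
exact: integral_reveal_or_mean_event.
Qed.

End reveal_or_mean.

Section wqd_test.
Context {R : realType} {n : nat} (w : 'I_n -> R) (mu1 mu2 : R).

Definition wqd_test (m : 'I_n) (x1 x2 : R) : bool :=
  (1 - w m) * (x2 - mu2) ^+ 2 < w m * (x1 - mu1) ^+ 2.

Lemma wqdE m x1 x2 :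
  wqd w mu1 mu2 m x1 x2 = if wqd_test m x1 x2 then 1%N else 2%N.
Proof. by []. Qed.

Lemma measurable_wqd_test m :
  measurable_fun setT (fun z : R * R => wqd_test m z.1 z.2).
Proof.
apply: measurable_fun_ltr; apply: measurable_funM => //;
  apply: measurable_funX; apply: measurable_funB => //.
Qed.

Lemma wqd_test_reflect1 m x1 x2 :
  wqd_test m (mu1 + mu1 - x1) x2 = wqd_test m x1 x2.
Proof.
by rewrite /wqd_test (_ : mu1 + mu1 - x1 - mu1 = - (x1 - mu1)) ?sqrrN //; ring.
Qed.

Lemma wqd_test_reflect2 m x1 x2 :
  wqd_test m x1 (mu2 + mu2 - x2) = wqd_test m x1 x2.
Proof.
by rewrite /wqd_test (_ : mu2 + mu2 - x2 - mu2 = - (x2 - mu2)) ?sqrrN //; ring.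
Qed.

Lemma measurable_wqd_test_swapN m :
  measurable_fun setT (fun z : R * R => ~~ wqd_test m z.2 z.1).
Proof.
exact: measurable_neg (measurableT_comp (measurable_wqd_test m)
  (@measurable_swap _ _ _ _)).
Qed.

End wqd_test.

Theorem proposition1 (R : realType) (d : measure_display) (T : measurableType d)
  (P : probability T R) (n : nat) (hn : (0 < n)%N)
  (X1 X2 Th : T -> R) (f1 f2 pi : R -> R) (mu1 mu2 : R)
  (psi : R -> 'I_n) (w : 'I_n -> R)
  (mX1 : measurable_fun setT X1) (mX2 : measurable_fun setT X2)
  (mTh : measurable_fun setT Th)
  (f1_meas : measurable_fun setT f1) (f2_meas : measurable_fun setT f2)
  (pi_meas : measurable_fun setT pi)
  (f1_pos : forall x, 0 < f1 x) (f2_pos : forall x, 0 < f2 x)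
  (pi_ge0 : forall x, 0 <= pi x)
  (f1_sym : forall t, f1 (mu1 + t) = f1 (mu1 - t))
  (f2_sym : forall t, f2 (mu2 + t) = f2 (mu2 - t))
  (dX1 : has_density P X1 f1) (dX2 : has_density P X2 f2)
  (dTh : has_density P Th pi)
  (iX1 : P.-integrable setT (EFin \o X1)) (iX2 : P.-integrable setT (EFin \o X2))
  (meanX1 : (\int[P]_t (X1 t)%:E = mu1%:E)%E)
  (meanX2 : (\int[P]_t (X2 t)%:E = mu2%:E)%E)
  (Th01 : forall t, 0 <= Th t <= 1)
  (indX : indep2 P X1 X2) (indTh : indep_of_pair P Th X1 X2)
  (psi_meas : forall i : 'I_n, measurable [set x : R | psi x = i])
  (w01 : forall i, 0 <= w i <= 1) :
  let M := fun t => psi (Th t) in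
  let S := fun t => wqd w mu1 mu2 (M t) (X1 t) (X2 t) in
  let Y := fun t => signal (S t) (X1 t) (X2 t) in
  cond_exp_version P X1 M Y (fun y m => (eta_star mu1 mu2 y m).1) /\
  cond_exp_version P X2 M Y (fun y m => (eta_star mu1 mu2 y m).2).
Proof.
move=> M S Y.
have indep12 A B C : measurable A -> measurable B -> measurable C ->
    P (X1 @^-1` A `&` X2 @^-1` B `&` Th @^-1` C) =
    (P (X1 @^-1` A) * P (X2 @^-1` B) * P (Th @^-1` C))%E.
  by move=> mA mB mC; rewrite indTh // indX.
have indep21 A B C : measurable A -> measurable B -> measurable C ->
    P (X2 @^-1` A `&` X1 @^-1` B `&` Th @^-1` C) =
    (P (X2 @^-1` A) * P (X1 @^-1` B) * P (Th @^-1` C))%E.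
  move=> mA mB mC.
  by rewrite (setIC (X2 @^-1` _)) indTh // indX // (muleC (P _)).
have YE t : Y t = if wqd_test w mu1 mu2 (M t) (X1 t) (X2 t)
                  then (1%N, X1 t) else (2%N, X2 t).
  by rewrite /Y /S wqdE; case: ifP.
split.
- apply: (cond_exp_version_reveal_or_mean mX1 mX2 mTh f1_meas
    (fun x => ltW (f1_pos x)) f1_sym dX1 iX1 indep12 psi_meas
    (measurable_wqd_test w mu1 mu2) (wqd_test_reflect1 w mu1 mu2)
    (isT : 1%N != 2%N) YE) => //.
- apply: (cond_exp_version_reveal_or_mean
    (revealed := fun m x2 x1 => ~~ wqd_test w mu1 mu2 m x1 x2)
    mX2 mX1 mTh f2_meas (fun x => ltW (f2_pos x)) f2_sym dX2 iX2 indep21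
    psi_meas
    (measurable_wqd_test_swapN w mu1 mu2)
    (fun m x2 x1 => congr1 negb (wqd_test_reflect2 w mu1 mu2 m x1 x2))
    (isT : 2%N != 1%N)) => // t.
  by rewrite YE; case: ifP.
Qed.
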